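(* Let $n \ge 2$ be an integer and let $A_n \in \{0,1\}^{[2]^n \times [2]^{n-1}}$ be the binary single-deletion channel, i.e. $(A_n)_{x,y} = 1$ if and only if $y$ can be obtained from $x$ by deleting exactly one symbol. For a binary string $y$ let $r_y$ be the number of runs of $y$, $u_y$ the number of runs of length one in $y$, and $b_y$ the number of runs of length one that occur at the start or at the end of $y$. Define \[ f(r,u,b) = \frac{1}{r}\left(1 + \frac{\max(2u - b - 2,\,0)}{(r+2)(r+1)}\right)^{-1}. \] Then the vector $z \in \mathbb{R}^{[2]^{n-1}}$ with $z_y = f(r_y,u_y,b_y)$ is feasible for $\kappa^*(A_n)$, i.e. $z \ge \mathbf{0}$ and $A_n z \ge \mathbf{1}$ entrywise; consequently $\kappa^*(A_n) \le \sum_{y \in [2]^{n-1}} z_y$.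
   Context: $[2]=\{0,1\}$ and $[2]^m$ is the set of binary strings of length $m$. A run of a string is a maximal block of consecutive equal symbols. For a $0/1$ matrix $A \in \{0,1\}^{X\times Y}$ (a combinatorial channel with inputs $X$ and outputs $Y$), the minimum fractional output covering number is $\kappa^*(A) = \min\{\mathbf{1}^T z : z \in \mathbb{R}^Y,\ z \ge \mathbf{0},\ Az \ge \mathbf{1}\}$, where inequalities are entrywise and $\mathbf{1},\mathbf{0}$ denote all-ones and all-zeros vectors. *)

From mathcomp Require Import all_boot all_order all_algebra.
Set Implicit Arguments. Unset Strict Implicit. Unset Printing Implicit Defensive.
Import Order.TTheory GRing.Theory Num.Theory.
Local Open Scope ring_scope.

Fixpoint run_lengths (s : seq bool) : seq nat :=
  match s with
  | [::] => [::]
  | a :: t =>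
      match run_lengths t with
      | k :: ks => if t is b :: _ then (if a == b then k.+1 :: ks else 1%N :: k :: ks)
                   else [:: 1%N]
      | [::] => [:: 1%N]
      end
  end.

Definition nruns (s : seq bool) : nat := size (run_lengths s).
Definition nsingle (s : seq bool) : nat := count (pred1 1%N) (run_lengths s).
(* b_y : number of runs of length one at the start or at the end of y
   (each run counted once; a single run that is both first and last counts once) *)
Definition nbound (s : seq bool) : nat :=
  let L := run_lengths s in
  match L with
  | [::] => 0%N
  | [:: k] => (k == 1%N)
  | k :: _ => (k == 1%N) + (last 0%N L == 1%N)
  end.

Definition del_at (i : nat) (s : seq bool) : seq bool := take i s ++ drop i.+1 s.

Definition del_channel (n : nat) (x : n.-tuple bool) (y : n.-1.-tuple bool) : bool :=
  [exists i : 'I_n, del_at i x == val y].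

Definition ffun_z {R : realFieldType} (r u b : nat) : R :=
  (r%:R)^-1 *
  (1 + (Num.max (2 * u%:R - b%:R - 2) 0) / ((r%:R + 2) * (r%:R + 1)))^-1.

Definition frac_cover_feasible {R : realFieldType} (X Y : finType)
  (A : X -> Y -> bool) (z : Y -> R) : Prop :=
  (forall y, 0 <= z y) /\ (forall x, 1 <= \sum_(y | A x y) z y).

Definition kappa_star_le {R : realFieldType} (X Y : finType)
  (A : X -> Y -> bool) (c : R) : Prop :=
  exists z : Y -> R, frac_cover_feasible A z /\ \sum_y z y <= c.

From mathcomp Require Import all_boot all_order all_algebra.
From mathcomp Require Import zify ring lra.
Import Order.TTheory GRing.Theory Num.Theory.

Set Implicit Arguments.
Unset Strict Implicit.
Unset Printing Implicit Defensive.

(* Let [x] have [r] runs, [u] of them of length one and [b] of those at an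
   end.  Deleting the first symbol of each run gives [r] distinct outputs.
   Deleting from a long run keeps the [r] runs and raises [2u - b] by at most 2;
   deleting an end singleton leaves [r - 1] runs, deleting an interior singleton
   merges its neighbours and leaves [r - 2] runs, and both lower [u].  Since
   [1 / (1 + t) >= 1 - t], each of the [r - u], [u - b] and [b] outputs of the
   three kinds has [z] at least an explicit rational function of [r], [u], [b],
   and these add up to at least 1. *)

(** * Run-length encoding *)

Fixpoint of_runs (b : bool) (L : seq nat) : seq bool :=
  if L is k :: L' then nseq k b ++ of_runs (~~ b) L' else [::].

Definition positive (L : seq nat) := all (fun k => 0 < k) L.

Lemma positive_cat l1 l2 : positive (l1 ++ l2) = positive l1 && positive l2.
Proof. exact: all_cat. Qed.

Lemma positive_nth L i : positive L -> i < size L -> 0 < nth 0 L i.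
Proof. by move=> pL iL; apply: (allP pL); rewrite mem_nth. Qed.

Lemma take_nth_drop (L : seq nat) i : i < size L ->
  L = take i L ++ nth 0 L i :: drop i.+1 L.
Proof. by move=> iL; rewrite -drop_nth // cat_take_drop. Qed.

Lemma size_of_runs b L : size (of_runs b L) = sumn L.
Proof. by elim: L b => //= k L IH b; rewrite size_cat size_nseq IH. Qed.

Lemma of_runs_cat b l1 l2 :
  of_runs b (l1 ++ l2) = of_runs b l1 ++ of_runs (b (+) odd (size l1)) l2.
Proof.
elim: l1 b => [|k l1 IH] b /=; first by rewrite addbF.
by rewrite IH catA addNb addbN.
Qed.

Lemma run_lengths_cons2 a c t : run_lengths [:: a, c & t] =
  if run_lengths (c :: t) is k :: ks then
    (if a == c then k.+1 :: ks else [:: 1, k & ks])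
  else [:: 1].
Proof. by []. Qed.

Lemma run_lengths_of_runs b L : positive L -> run_lengths (of_runs b L) = L.
Proof.
elim: L b => // -[//|k] L IH b pL.
have {}pL : positive L := pL.
rewrite [of_runs b _]/=; elim: k => [|k IHk].
  rewrite /= IH //; case: L pL {IH} => // -[//|k'] L'' _.
  by case: b.
rewrite (_ : nseq k.+1 b ++ _ = b :: (nseq k b ++ of_runs (~~ b) L)) //.
by rewrite run_lengths_cons2 IHk eqxx.
Qed.

Lemma positive_run_lengths s : positive (run_lengths s).
Proof.
elim: s => //= a t IH.
case E: (run_lengths t) IH => [|k ks] //=.
case: t E => //= c t' _ /andP[kp ksp].
by case: (a == c) => /=; rewrite ?kp ?ksp.
Qed.

Lemma of_run_lengths s : of_runs (head true s) (run_lengths s) = s.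
Proof.
elim: s => // a [//|c t] IH.
rewrite run_lengths_cons2; move: IH (positive_run_lengths (c :: t)).
case E: (run_lengths (c :: t)) => [|[|k] ks] //= IH _.
have [->|neq] := eqVneq a c; rewrite /=; first by case: IH => ->.
rewrite (_ : ~~ a = c) ?negbK; first by case: IH => ->.
by move: neq; case: a c {E IH} => [] [].
Qed.

(** * Deleting the first symbol of a run *)

Lemma del_at_cat (s1 : seq bool) x s2 : del_at (size s1) (s1 ++ x :: s2) = s1 ++ s2.
Proof.
by rewrite /del_at take_size_cat // drop_cat ltnNge leqnSn /= subSnn drop1.
Qed.

Lemma size_del_at (s : seq bool) p : p < size s -> size (del_at p s) = (size s).-1.
Proof. by move=> ps; rewrite /del_at size_cat size_take size_drop ps; lia. Qed.

Lemma nth_del_at (s : seq bool) p k : p < size s ->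
  nth false (del_at p s) k = nth false s (if k < p then k else k.+1).
Proof.
move=> ps; rewrite /del_at nth_cat size_take ps.
case: ifP => kp; first by rewrite nth_take.
by rewrite nth_drop; congr nth; move: kp => /negbT; rewrite -leqNgt; lia.
Qed.

Lemma del_at_of_runs b l1 k l2 :
  del_at (sumn l1) (of_runs b (l1 ++ k.+1 :: l2)) =
  of_runs b l1 ++ nseq k (b (+) odd (size l1)) ++ of_runs (~~ (b (+) odd (size l1))) l2.
Proof. by rewrite of_runs_cat -(size_of_runs b l1) [of_runs _ (_ :: _)]/= del_at_cat. Qed.

Lemma run_lengths_del_long b l1 k l2 : positive (l1 ++ k.+2 :: l2) ->
  run_lengths (del_at (sumn l1) (of_runs b (l1 ++ k.+2 :: l2))) = l1 ++ k.+1 :: l2.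
Proof.
rewrite positive_cat => /andP[p1 /= p2].
by rewrite del_at_of_runs -[nseq _ _ ++ _]/(of_runs _ (k.+1 :: l2)) -of_runs_cat
  run_lengths_of_runs // positive_cat p1.
Qed.

Lemma run_lengths_del_first b l2 : positive l2 ->
  run_lengths (del_at 0 (of_runs b (1 :: l2))) = l2.
Proof. by move=> p; rewrite /del_at /= drop0 run_lengths_of_runs. Qed.

Lemma run_lengths_del_last b l1 : positive l1 ->
  run_lengths (del_at (sumn l1) (of_runs b (rcons l1 1))) = l1.
Proof. by move=> p; rewrite -cats1 del_at_of_runs /= cats0 run_lengths_of_runs. Qed.

Lemma run_lengths_del_mid b l1 a d l2 : positive (rcons l1 a ++ d :: l2) ->
  run_lengths (del_at (sumn (rcons l1 a)) (of_runs b (rcons l1 a ++ 1 :: d :: l2)))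
  = l1 ++ (a + d) :: l2.
Proof.
rewrite -cats1 -catA !positive_cat /= => /and3P[p1 /andP[pa _] /andP[pd p2]].
rewrite del_at_of_runs /= of_runs_cat size_cat addn1 /= addbN negbK cats0.
rewrite -catA [nseq a _ ++ _]catA -nseqD.
rewrite -[nseq (a + d) _ ++ _]/(of_runs _ ((a + d) :: l2)) -of_runs_cat.
by rewrite run_lengths_of_runs // positive_cat p1 /= p2 addn_gt0 pa.
Qed.

Lemma sumn_take_lt L i : positive L -> i < size L -> sumn (take i L) < sumn L.
Proof.
move=> pL iL; have ai := positive_nth pL iL.
by rewrite [in X in _ < X](take_nth_drop iL) sumn_cat /=; lia.
Qed.

Lemma sumn_take_mono L i j : i <= j -> sumn (take i L) <= sumn (take j L).
Proof. by move=> ij; rewrite -(subnKC ij) takeD sumn_cat leq_addr. Qed.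

Lemma nth_cat_size (s1 s2 : seq bool) k :
  nth false (s1 ++ s2) (size s1 + k) = nth false s2 k.
Proof. by rewrite nth_cat ltnNge leq_addr /= addKn. Qed.

Lemma of_runs_boundary b L i : positive L -> i.+1 < size L ->
  nth false (of_runs b L) (sumn (take i.+1 L)).-1 !=
  nth false (of_runs b L) (sumn (take i.+1 L)).
Proof.
move=> pL iL; have iL' : i < size L by lia.
have eL : L = take i L ++ nth 0 L i :: nth 0 L i.+1 :: drop i.+2 L.
  by rewrite -drop_nth // -take_nth_drop.
have ai := positive_nth pL iL'; have di := positive_nth pL iL.
rewrite (take_nth 0 iL') sumn_rcons.
move: (take i L) (nth 0 L i) (nth 0 L i.+1) (drop i.+2 L) eL ai di => l1 a d l2 -> ai di.
rewrite of_runs_cat /=; set c := b (+) _.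
have -> : (sumn l1 + a).-1 = size (of_runs b l1) + a.-1 by rewrite size_of_runs; lia.
rewrite -(size_of_runs b l1) !nth_cat_size !nth_cat size_nseq ltnn subnn nth_nseq.
have -> : a.-1 < a by lia.
by rewrite size_nseq di nth_nseq di; case: c.
Qed.

(* The two strings differ at the last position of the earlier run. *)
Lemma del_at_run_starts_neq b L i j : positive L -> i < j < size L ->
  del_at (sumn (take i L)) (of_runs b L) != del_at (sumn (take j L)) (of_runs b L).
Proof.
move=> pL /andP[ij jL]; set s := of_runs b L.
have ss : size s = sumn L by rewrite size_of_runs.
have iL : i < size L by lia.
have ai := positive_nth pL iL.
have m_def : sumn (take i.+1 L) = sumn (take i L) + nth 0 L i.
  by rewrite (take_nth 0 iL) sumn_rcons.
have mq : sumn (take i.+1 L) <= sumn (take j L) by apply: sumn_take_mono.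
have qn := sumn_take_lt pL jL.
apply: contra (of_runs_boundary b pL (leq_ltn_trans ij jL)) => /eqP E.
have := congr1 (nth false ^~ (sumn (take i.+1 L)).-1) E.
rewrite !nth_del_at ?ss; try lia.
have -> : ((sumn (take i.+1 L)).-1 < sumn (take i L)) = false by lia.
have -> : ((sumn (take i.+1 L)).-1 < sumn (take j L)) = true by lia.
have -> : (sumn (take i.+1 L)).-1.+1 = sumn (take i.+1 L) by lia.
by move=> ->.
Qed.

(** * Counting singleton runs *)

Definition nbound_of (L : seq nat) : nat :=
  match L with
  | [::] => 0
  | [:: k] => k == 1
  | k :: _ :: _ => (k == 1) + (last 0 L == 1)
  end.

Lemma nbound_run_lengths s : nbound s = nbound_of (run_lengths s).
Proof. by rewrite /nbound; case: run_lengths => [|k [|k' t]]. Qed.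

Lemma nbound_of_cons a t :
  nbound_of (a :: t) = (a == 1) + ((t != [::]) && (last a t == 1)).
Proof. by case: t => [|x t] //=; rewrite addn0. Qed.

Lemma nbound_of_le2 L : nbound_of L <= 2.
Proof. by case: L => [|k [|k' t]] //=; case: (k == 1); case: (_ == 1). Qed.

Lemma nbound_of_le_count L : nbound_of L <= count (pred1 1) L.
Proof.
case: L => [|k [|k' t]] //=; first by rewrite addn0.
rewrite leq_add2l; case: eqP => //= e.
rewrite -[_ + _]/(count (pred1 1) (k' :: t)) -has_count.
by apply/hasP; exists (last k' t); [exact: mem_last | rewrite /= e].
Qed.

Lemma nbound_of_long l1 k l2 : nbound_of (l1 ++ k.+2 :: l2) <= nbound_of (l1 ++ k.+1 :: l2).
Proof.
have last_le c c' : c != 1 -> (last c l2 == 1) <= (last c' l2 == 1).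
  by case: l2 => //= /negbTE ->.
case: l1 => [|a l1]; first by rewrite !cat0s !nbound_of_cons leq_add //; case: l2 {last_le}.
rewrite cat_cons !nbound_of_cons leq_add2l.
have ne c : l1 ++ c :: l2 != [::] by case: l1.
by rewrite !ne /= !last_cat /=; apply: last_le.
Qed.

Lemma count_single_long l1 k l2 :
  count (pred1 1) (l1 ++ k.+1 :: l2) <= (count (pred1 1) (l1 ++ k.+2 :: l2)).+1.
Proof. by rewrite !count_cat /=; case: (k == 0) => /=; lia. Qed.

Lemma count_single_mid l1 a d l2 : 0 < a -> 0 < d ->
  (count (pred1 1) (l1 ++ (a + d) :: l2)).+1 <= count (pred1 1) (rcons l1 a ++ 1 :: d :: l2).
Proof.
move=> pa pd; rewrite -cats1 -catA !count_cat /=.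
have -> : (a + d == 1) = false by apply/eqP; lia.
by case: (a == 1); case: (d == 1) => /=; lia.
Qed.

Lemma sum_nth_single L : \sum_(i < size L) (nth 0 L i == 1) = count (pred1 1) L.
Proof.
rewrite -sum1_count (big_nth 0) big_mkord [RHS]big_mkcond /=.
by apply: eq_bigr => i _; case: (_ == 1).
Qed.

Lemma sum_nth_single_end L :
  \sum_(i < size L) ((nth 0 L i == 1) && ((i == 0 :> nat) || (i == (size L).-1 :> nat)))
  = nbound_of L.
Proof.
case: L => [|k [|k' t]]; first by rewrite big_ord0.
  by rewrite big_ord1 /= andbT.
rewrite [size _]/= big_ord_recl big_ord_recr /= big1 ?add0n.
  by rewrite andbT (nth_last 0 (k' :: t)) /bump /= add1n eqxx andbT.
by move=> i _; rewrite /bump add0n /= add1n eqSS (ltn_eqF (ltn_ord i)) andbF.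
Qed.

Lemma count_single_few_runs L : 2 <= sumn L -> [/\ 1 <= size L,
  (size L <= 2 -> count (pred1 1) L = nbound_of L) & (size L = 1 -> count (pred1 1) L = 0)].
Proof.
case: L => [|k [|k' [|k'' t]]] //= s2; split => //; rewrite ?addn0 //.
by case: k s2 => [|[|k]].
Qed.

(** * Lower bounds for [z] *)

Local Open Scope ring_scope.

Section Bounds.
Variable R : realFieldType.

Definition zlin (x G : R) : R := x^-1 * (1 - G / ((x + 2) * (x + 1))).

Definition zlb (r : nat) (G : R) : R := zlin r%:R (Num.max G 0).

Definition z_of_runs (L : seq nat) : R :=
  ffun_z (size L) (count (pred1 1%N) L) (nbound_of L).

(* [1 / (1 + t) >= 1 - t] linearises [ffun_z]. *)
Lemma zlb_le_ffun_z (r u b : nat) (G : R) :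
  2 * u%:R - b%:R - 2 <= G -> zlb r G <= ffun_z r u b.
Proof.
move=> hG; rewrite /zlb /zlin /ffun_z.
apply: ler_wpM2l; first by rewrite invr_ge0 ler0n.
set D := (r%:R + 2) * (r%:R + 1).
have Dp : 0 < D by rewrite /D mulr_gt0 // ltr_wpDl // ler0n.
set t := Num.max (2 * u%:R - b%:R - 2) 0 / D.
have t0 : 0 <= t by rewrite divr_ge0 ?le_max ?lexx ?orbT // ltW.
have tt : t <= Num.max G 0 / D.
  by rewrite ler_pM2r ?invr_gt0 // ge_max !le_max lexx hG /= orbT.
apply: (@le_trans _ _ (1 - t)); first by lra.
rewrite -[(1 + _)^-1]div1r ler_pdivlMr; last by lra.
have : 0 <= t * t by rewrite mulr_ge0.
have -> : (1 - t) * (1 + t) = 1 - t * t by ring.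
lra.
Qed.

Lemma ffun_z_ge0 (r u b : nat) : 0 <= ffun_z (R := R) r u b.
Proof.
rewrite /ffun_z mulr_ge0 ?invr_ge0 ?ler0n // addr_ge0 // divr_ge0 ?le_max ?lexx ?orbT //.
by rewrite mulr_ge0 // addr_ge0 // ler0n.
Qed.

Definition excess (u b c : nat) : R := 2 * u%:R - b%:R - c%:R.

Lemma zlb_le_ffun_z_nat (r u b u' b' c : nat) : (2 * u' + b + c <= 2 * u + b' + 2)%N ->
  zlb r (excess u b c) <= ffun_z r u' b'.
Proof.
rewrite -(ler_nat R) !natrD /excess => h.
by apply: zlb_le_ffun_z; lra.
Qed.

Lemma zlb_le_ffun_z_single (r u b u' b' c : nat) :
  (u' < u)%N -> (b <= 2)%N -> (c <= 2)%N ->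
  zlb r (excess u b c) <= ffun_z r u' b'.
Proof. by move=> *; apply: zlb_le_ffun_z_nat; lia. Qed.

(* [single]: the run has length one; [at_end]: it is the first or the last run. *)
Definition del_run_bound (r u b : nat) (single at_end : bool) : R :=
  if single then (if at_end then zlb r.-1 (excess u b 1) else zlb (r - 2) (excess u b 2))
  else zlb r (excess u b 0).

Lemma del_long_run_bound b0 l1 k l2 (L := l1 ++ k.+2 :: l2) : positive L ->
  del_run_bound (size L) (count (pred1 1%N) L) (nbound_of L) false false
  <= z_of_runs (run_lengths (del_at (sumn l1) (of_runs b0 L))).
Proof.
move=> pL; rewrite /z_of_runs run_lengths_del_long // (_ : size _ = size L); last first.
  by rewrite !size_cat.
apply: zlb_le_ffun_z_nat.
by have := count_single_long l1 k l2; have := nbound_of_long l1 k l2; rewrite /L; lia.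
Qed.

Lemma del_single_run_bound b0 l1 l2 (L := l1 ++ 1%N :: l2) : positive L -> (2 <= sumn L)%N ->
  del_run_bound (size L) (count (pred1 1%N) L) (nbound_of L) true ((l1 == [::]) || (l2 == [::]))
  <= z_of_runs (run_lengths (del_at (sumn l1) (of_runs b0 L))).
Proof.
rewrite {}/L; have := nbound_of_le2 (l1 ++ 1%N :: l2).
case: l1 => [|a1 l1]; case: l2 => [|d l2] bL pL sL //.
- rewrite /z_of_runs run_lengths_del_first //.
  by apply: zlb_le_ffun_z_single.
- move: (a1 :: l1) pL bL {sL} => {}l1; rewrite cats1 => pL bL.
  have p1 : positive l1 by move: pL; rewrite -cats1 positive_cat => /andP[].
  rewrite /z_of_runs run_lengths_del_last // size_rcons.
  rewrite orbT; apply: zlb_le_ffun_z_single bL _ => //.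
  by rewrite -cats1 count_cat /=; lia.
have [l1' [a e1]] : exists l1' a, a1 :: l1 = rcons l1' a.
  by exists (belast a1 l1), (last a1 l1); rewrite lastI.
rewrite e1 in pL bL *; rewrite orbF -size_eq0 size_rcons /=.
rewrite /z_of_runs run_lengths_del_mid; last by move: pL; rewrite !positive_cat.
have [pa pd] : (0 < a)%N /\ (0 < d)%N.
  by move: pL; rewrite -cats1 -catA !positive_cat /= => /and3P[_ /andP[-> _] /andP[-> _]].
rewrite (_ : size (l1' ++ _) = (size (rcons l1' a ++ [:: 1%N, d & l2]) - 2)%N); last first.
  by rewrite !size_cat size_rcons /=; lia.
apply: zlb_le_ffun_z_single bL _ => //.
exact: count_single_mid.
Qed.

Lemma del_run_bound_le b0 L i : positive L -> (2 <= sumn L)%N -> (i < size L)%N ->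
  del_run_bound (size L) (count (pred1 1%N) L) (nbound_of L)
    (nth 0%N L i == 1%N) ((i == 0%N) || (i == (size L).-1))
  <= z_of_runs (run_lengths (del_at (sumn (take i L)) (of_runs b0 L))).
Proof.
move=> pL sL iL.
have last_i : (drop i.+1 L == [::]) = (i == (size L).-1).
  by rewrite -size_eq0 size_drop; apply/eqnP/eqnP => /= h; lia.
have first_i : (take i L == [::]) = (i == 0%N) by rewrite -size_eq0 size_take iL.
rewrite -first_i -last_i; move: (take_nth_drop iL) pL sL.
move: (take i L) (nth 0%N L i) (drop i.+1 L) => l1 [|[|k]] l2 -> pL sL.
- by move: pL; rewrite positive_cat => /andP[_ /andP[]].
- exact: del_single_run_bound.
- exact: del_long_run_bound.
Qed.

Lemma zlin_ends (x b : R) : 2 <= x -> 0 <= b -> b <= x ->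
  1 <= (x - b) * zlin x b + b * zlin (x - 1) (b - 1).
Proof.
move=> x2 b0 bx; rewrite /zlin -subr_ge0.
have -> : (x - b) * (x^-1 * (1 - b / ((x + 2) * (x + 1))))
    + b * ((x - 1)^-1 * (1 - (b - 1) / ((x - 1 + 2) * (x - 1 + 1)))) - 1
  = b * ((x - b) * (3 * x + 3) + 2 * ((x + 1) * (x + 2)))
    / (x * ((x - 1) * (x + 1)) * ((x + 1) * (x + 2))).
  by field; apply/and4P; split; rewrite gt_eqF //; lra.
apply: divr_ge0; first by rewrite mulr_ge0 // addr_ge0 // !mulr_ge0 //; lra.
by apply/ltW; rewrite !mulr_gt0 //; lra.
Qed.

Lemma zlin_mixed (x u b : R) : 3 <= x -> 0 <= b -> b <= u -> u <= x ->
  1 <= (x - u) * zlin x (2 * u - b) + (u - b) * zlin (x - 2) (2 * u - b - 2)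
       + b * zlin (x - 1) (2 * u - b - 1).
Proof.
move=> x3 b0 bu ux; rewrite /zlin -subr_ge0.
set d1 := (x - 2) * (x - 1); set d2 := (x - 1) * (x + 1); set d3 := (x + 1) * (x + 2).
have d1p : 0 < d1 by rewrite mulr_gt0 //; lra.
have d2p : 0 < d2 by rewrite mulr_gt0 //; lra.
have d3p : 0 < d3 by rewrite mulr_gt0 //; lra.
have -> : (x - u) * (x^-1 * (1 - (2 * u - b) / ((x + 2) * (x + 1))))
    + (u - b) * ((x - 2)^-1 * (1 - (2 * u - b - 2) / ((x - 2 + 2) * (x - 2 + 1))))
    + b * ((x - 1)^-1 * (1 - (2 * u - b - 1) / ((x - 1 + 2) * (x - 1 + 1)))) - 1
  = (2 * (u - b) * (x - u) * d2 * (6 * x)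
     + b * ((x - u) * d1 * (3 * x + 3) + (u - b) * d3 * (3 * x - 3) + 2 * d1 * d3))
    / (x * d1 * d2 * d3).
  by rewrite /d1 /d2 /d3; field; apply/and5P; split; rewrite gt_eqF //; lra.
apply: divr_ge0; last by apply/ltW; rewrite !mulr_gt0 //; lra.
apply: addr_ge0; first by rewrite !mulr_ge0 //; lra.
by apply: mulr_ge0 => //; rewrite !addr_ge0 // !mulr_ge0 //; lra.
Qed.

Lemma natr_mul_zlb (k r : nat) (G : R) :
  ((0 < k)%N -> 0 <= G) -> k%:R * zlb r G = k%:R * zlin r%:R G.
Proof. by case: k => [|k] hG; rewrite ?mul0r // /zlb max_l ?hG. Qed.

Lemma run_classes_bound (r u b : nat) :
  (1 <= r)%N -> (b <= u <= r)%N -> ((r <= 2)%N -> u = b) -> (r = 1 -> u = 0)%N ->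
  1 <= (r - u)%:R * zlb r (excess u b 0) + (u - b)%:R * zlb (r - 2) (excess u b 2)
       + b%:R * zlb r.-1 (excess u b 1).
Proof.
move=> r1 /andP[bu ur] r2 r1u.
have excess_ge0 c : (c + b <= 2 * u)%N -> 0 <= excess u b c.
  by rewrite -(ler_nat R) natrD natrM /excess => h; lra.
rewrite !natr_mul_zlb => [|h|h|h]; try (apply: excess_ge0; lia).
have er1 : r.-1%:R = r%:R - 1 :> R by rewrite -subn1 natrB.
have [bu'|eub] : (b < u)%N \/ b = u by lia.
  have r3 : (3 <= r)%N by case: (leqP r 2) => // /r2; lia.
  rewrite !natrB ?er1 /excess ?mulr0n ?subr0; try lia.
  by apply: zlin_mixed; rewrite ?ler_nat ?(ler_nat R 3) // ltnW.
subst u; rewrite subnn mul0r addr0 natrB // er1 /excess mulr0n subr0.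
have -> : 2 * b%:R - b%:R = b%:R :> R by ring.
case: (ltngtP r 1) r1 => // [r_gt1 | r_eq1] _; last first.
  by rewrite r_eq1 (r1u r_eq1) subr0 mul0r addr0 mul1r /zlin mul0r subr0 mulr1 invr1.
by apply: zlin_ends; rewrite ?ler_nat ?(ler_nat R 2).
Qed.

Lemma sum_del_run_bound L : positive L -> (2 <= sumn L)%N ->
  1 <= \sum_(i < size L) del_run_bound (size L) (count (pred1 1%N) L) (nbound_of L)
         (nth 0%N L i == 1%N) ((i == 0 :> nat) || (i == (size L).-1 :> nat)).
Proof.
move=> pL sL; have [r1 r2 r1u] := count_single_few_runs sL.
have bu := nbound_of_le_count L; have ur := count_size (pred1 1%N) L.
set r := size L in r1 r2 r1u ur *; set u := count _ L in r2 r1u bu ur *.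
set b := nbound_of L in r2 bu *.
set A := zlb r (excess u b 0); set B := zlb (r - 2) (excess u b 2).
set C := zlb r.-1 (excess u b 1).
rewrite (eq_bigr (fun i : 'I_r => A + (nth 0%N L i == 1%N)%:R * (B - A)
    + ((nth 0%N L i == 1%N) && ((i == 0 :> nat) || (i == r.-1 :> nat)))%:R * (C - B)));
  last by move=> i _; rewrite /del_run_bound; case: (_ == 1%N); case: (_ || _);
    rewrite /= ?mulr1n ?mulr0n /A /B /C; ring.
rewrite !big_split /= sumr_const card_ord -!big_distrl /= -!natr_sum.
rewrite sum_nth_single sum_nth_single_end -/u -/b.
have buur : (b <= u <= r)%N by rewrite bu ur.
apply: le_trans (run_classes_bound r1 buur r2 r1u) _.
rewrite -/A -/B -/C !natrB // -[A *+ r]mulr_natl le_eqVlt; apply/orP; left.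
by apply/eqP; ring.
Qed.

Lemma sum_z_del_run_starts (s : seq bool) : (2 <= size s)%N ->
  1 <= \sum_(i < nruns s)
         ffun_z (R := R) (nruns (del_at (sumn (take i (run_lengths s))) s))
           (nsingle (del_at (sumn (take i (run_lengths s))) s))
           (nbound (del_at (sumn (take i (run_lengths s))) s)).
Proof.
move=> s2; have pL := positive_run_lengths s.
have sL : (2 <= sumn (run_lengths s))%N by rewrite -(size_of_runs (head true s)) of_run_lengths.
apply: le_trans (sum_del_run_bound pL sL) _; apply: ler_sum => i _.
rewrite nbound_run_lengths -[in X in del_at _ X](of_run_lengths s).
exact: del_run_bound_le.
Qed.

Lemma sum_le_sum_injective (I T : finType) (Y : I -> T) (P : pred T) (F : T -> R) :
  injective Y -> (forall i, P (Y i)) -> (forall y, 0 <= F y) ->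
  \sum_i F (Y i) <= \sum_(y | P y) F y.
Proof.
move=> Yinj PY F0; rewrite -(big_imset _ (in2W Yinj)) /=.
rewrite [X in _ <= X](bigID [in [set Y i | i in I]]) /=.
set A := [set Y i | i in I].
have -> : \sum_(y | P y && (y \in A)) F y = \sum_(y in A) F y.
  apply: eq_bigl => y; apply/andP/idP => [[]|yA] //.
  by split=> //; case/imsetP: yA => i _ ->.
by rewrite lerDl sumr_ge0.
Qed.

End Bounds.

Section RunStartDeletions.
Variables (n : nat) (x : n.-tuple bool).

Definition del_run_start (i : 'I_(nruns x)) : n.-1.-tuple bool :=
  insubd (nseq_tuple n.-1 false) (del_at (sumn (take i (run_lengths x))) x).

Lemma run_start_lt (i : 'I_(nruns x)) : (sumn (take i (run_lengths x)) < size x)%N.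
Proof.
have := size_of_runs (head true x) (run_lengths x); rewrite of_run_lengths => ->.
exact: sumn_take_lt (positive_run_lengths x) (ltn_ord i).
Qed.

Lemma val_del_run_start i : val (del_run_start i) = del_at (sumn (take i (run_lengths x))) x.
Proof. by apply: insubdK; rewrite -topredE /= size_del_at ?run_start_lt ?size_tuple. Qed.

Lemma del_run_start_inj : injective del_run_start.
Proof.
have neq (i j : 'I_(nruns x)) : (i < j)%N -> del_run_start i != del_run_start j.
  move=> ij; rewrite -(inj_eq val_inj) !val_del_run_start.
  move: (nat_of_ord i) (nat_of_ord j) ij (ltn_ord j) => a c ac cr.
  set L := run_lengths x; rewrite -(of_run_lengths x).
  by apply: del_at_run_starts_neq; rewrite ?positive_run_lengths ?ac.
move=> i j eij; apply/eqP; case: (ltngtP i j) => [ij|ji|/val_inj ->] //.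
- by move: (neq _ _ ij); rewrite eij eqxx.
- by move: (neq _ _ ji); rewrite eij eqxx.
Qed.

Lemma del_channel_run_start i : del_channel x (del_run_start i).
Proof.
have := run_start_lt i; rewrite size_tuple => lt_n.
apply/existsP; exists (Ordinal lt_n).
by rewrite val_del_run_start.
Qed.

End RunStartDeletions.

Theorem theorem1 (R : realFieldType) (n : nat) (hn : (2 <= n)%N) :
  let z := fun y : n.-1.-tuple bool =>
             ffun_z (R := R) (nruns y) (nsingle y) (nbound y) in
  frac_cover_feasible (@del_channel n) z /\
  kappa_star_le (@del_channel n) (\sum_y z y).
Proof.
move=> z; have z_ge0 y : 0 <= z y by exact: ffun_z_ge0.
have feasible : frac_cover_feasible (@del_channel n) z.
  split=> // x; apply: le_trans (@sum_z_del_run_starts R x _) _; first by rewrite size_tuple.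
  rewrite (eq_bigr (fun i => z (del_run_start i))); last by move=> i _; rewrite /z val_del_run_start.
  by apply: sum_le_sum_injective; [exact: del_run_start_inj | exact: del_channel_run_start |].
by split=> //; exists z.
Qed.
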